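(* The skew characteristic polynomial is a $4$-invariant of simple graphs: for every simple graph $G$ and every pair of distinct vertices $a,b$ of $G$, $$Q_G(u)-Q_{G'_{ab}}(u)=Q_{\widetilde G_{ab}}(u)-Q_{\widetilde G'_{ab}}(u).$$
   Context: For a simple graph $G$, $A(G)$ denotes its adjacency matrix over $\mathbb{F}_2$ (entry $1$ iff the vertices are adjacent, zero diagonal), and the nondegeneracy $\nu(G)\in\{0,1\}$ equals $1$ iff $\det A(G)=1$ over $\mathbb{F}_2$ (with $\nu$ of the empty graph equal to $1$, the determinant of the empty matrix being $1$). The skew characteristic polynomial is $Q_G(u)=\sum_{U\subset V(G)}\nu(G|_U)\,u^{|V(G)|-|U|}$, where $G|_U$ is the subgraph induced on $U$. For vertices $a,b$: $G'_{ab}$ is obtained from $G$ by switching adjacency between $a$ and $b$; $\widetilde G_{ab}$ is obtained by switching the adjacency between $a$ and each vertex $v\ne a$ adjacent to $b$; $\widetilde G'_{ab}$ is the composition of these two operations. *)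

From mathcomp Require Import all_boot all_order all_algebra.
Set Implicit Arguments. Unset Strict Implicit. Unset Printing Implicit Defensive.
Import GRing.Theory.
Local Open Scope ring_scope.

Definition simple_graph (T : finType) (e : rel T) : Prop :=
  irreflexive e /\ symmetric e.

Definition adj_induced (T : finType) (e : rel T) (U : {set T}) : 'M['F_2]_#|U| :=
  \matrix_(i, j) (e (enum_val i) (enum_val j))%:R.

(* nondegeneracy of the induced subgraph G|_U : 1 iff det A(G|_U) = 1 over F_2
   (empty matrix has det 1). *)
Definition nu (T : finType) (e : rel T) (U : {set T}) : bool :=
  \det (adj_induced e U) == 1.

Definition skewQ (T : finType) (e : rel T) : {poly int} :=
  \sum_(U : {set T}) (nu e U)%:R *: 'X^(#|T| - #|U|).

Definition switch_ab (T : finType) (e : rel T) (a b : T) : rel T :=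
  fun x y => if ((x == a) && (y == b)) || ((x == b) && (y == a))
             then ~~ e x y else e x y.

(* ~G_ab : switch adjacency between a and every vertex v <> a adjacent to b *)
Definition tilde_ab (T : finType) (e : rel T) (a b : T) : rel T :=
  fun x y => e x y (+) (((x == a) && (y != a) && e b y)
                        || ((y == a) && (x != a) && e b x)).

Definition tilde_switch_ab (T : finType) (e : rel T) (a b : T) : rel T :=
  switch_ab (tilde_ab e a b) a b.

(* If a and b lie in U, the adjacency matrix of ~G_ab induced on U arises from
   that of G|_U by adding row b to row a and then column b to column a (over
   F_2, as A(G) is symmetric with zero diagonal): a congruence by a
   transvection, which preserves the determinant.  So nu(~G|_U) = nu(G|_U),
   and likewise nu(~G'|_U) = nu(G'|_U) because ~G'_ab = (G'_ab)~ when a <> b.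
   If U misses a or b, switching the pair a b does not change the subgraph
   induced on U, so both differences vanish.  The identity thus holds
   subset by subset in the defining sums. *)

From mathcomp Require Import all_boot all_order all_algebra.
Set Implicit Arguments. Unset Strict Implicit. Unset Printing Implicit Defensive.
Import GRing.Theory.
Local Open Scope ring_scope.

Lemma natr_addb_pchar2 (R : nzSemiRingType) (b1 b2 : bool) : 2 \in [pchar R] ->
  (b1 (+) b2)%:R = b1%:R + b2%:R :> R.
Proof.
by move=> pcharR2; case: b1; case: b2; rewrite ?addr0 ?add0r ?addrr_pchar2.
Qed.

Section Transvection.

Variable R : comPzRingType.

Definition transvection n (i j : 'I_n) : 'M[R]_n := 1%:M + delta_mx i j.

Lemma delta_mulmxE m n p (i0 : 'I_m) (j0 : 'I_n) (A : 'M[R]_(n, p)) i j :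
  (delta_mx i0 j0 *m A) i j = (i == i0)%:R * A j0 j.
Proof.
rewrite mxE (bigD1 j0) //= big1 ?addr0; first by rewrite mxE eqxx andbT.
by move=> k /negbTE nk; rewrite mxE nk andbF mul0r.
Qed.

Lemma mulmx_deltaE m n p (i0 : 'I_n) (j0 : 'I_p) (A : 'M[R]_(m, n)) i j :
  (A *m delta_mx i0 j0) i j = A i i0 * (j == j0)%:R.
Proof.
rewrite mxE (bigD1 i0) //= big1 ?addr0; first by rewrite mxE eqxx.
by move=> k /negbTE nk; rewrite mxE nk mulr0.
Qed.

Lemma transvection_conjE n (i j : 'I_n) (A : 'M[R]_n) k l :
  (transvection i j *m A *m transvection j i) k l =
  A k l + (k == i)%:R * A j l + A k j * (l == i)%:R
        + (k == i)%:R * A j j * (l == i)%:R.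
Proof.
rewrite /transvection !(mulmxDl, mulmxDr, mul1mx, mulmx1) ![((_ + _ : 'M_n) _ _)]mxE.
by rewrite !mulmx_deltaE !delta_mulmxE addrA.
Qed.

Lemma det_transvection n (i j : 'I_n) : i != j -> \det (transvection i j) = 1.
Proof.
move=> nij; wlog lt_ji : i j nij / (j < i)%N => [wlog_lt|].
  case: (ltngtP i j) => [lt_ij | lt_ji | /val_inj eq_ij]; last first.
  - by rewrite eq_ij eqxx in nij.
  - exact: wlog_lt.
  rewrite -det_tr /transvection linearD /= trmx1 trmx_delta.
  by apply: wlog_lt; rewrite // eq_sym.
rewrite det_trig; last first.
  apply/is_trig_mxP => k l lt_kl; rewrite !mxE -val_eqE (ltn_eqF lt_kl) add0r.
  case: (k =P i) => [eki|] //=; case: (l =P j) => [elj|] //=.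
  by rewrite eki elj ltnNge (ltnW lt_ji) in lt_kl.
apply: big1 => k _; rewrite !mxE eqxx.
case: (k =P i) => [->|_]; last by rewrite addr0.
by move/negPf: nij => ->; rewrite addr0.
Qed.

Lemma det_transvection_conj n (i j : 'I_n) (A : 'M[R]_n) : i != j ->
  \det (transvection i j *m A *m transvection j i) = \det A.
Proof.
move=> nij; rewrite !det_mulmx !det_transvection ?mul1r ?mulr1 //.
by rewrite eq_sym.
Qed.

End Transvection.

Arguments transvection {R n}.

Section SkewCharacteristicPolynomial.

Variables (T : finType) (a b : T).
Implicit Types (e : rel T) (U : {set T}).

Lemma tilde_ab_F2E e x y : irreflexive e -> symmetric e ->
  (tilde_ab e a b x y)%:R =
  (e x y)%:R + (x == a)%:R * (e b y)%:R + (e x b)%:R * (y == a)%:R :> 'F_2.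
Proof.
move=> irr sym; rewrite /tilde_ab natr_addb_pchar2 ?pchar_Fp //.
case: (x =P a) => [->|_]; case: (y =P a) => [->|_] /=;
  rewrite ?irr ?mul1r ?mulr1 ?mul0r ?mulr0 ?orbF ?addr0 //=.
- by rewrite add0r (sym a) addrr_pchar2 ?pchar_Fp.
- by rewrite (sym b).
Qed.

Lemma eq_nu e e' U : {in U &, e =2 e'} -> nu e U = nu e' U.
Proof.
move=> ee'; rewrite /nu /adj_induced; congr (\det _ == 1).
by apply/matrixP => i j; rewrite !mxE ee' ?enum_valP.
Qed.

Lemma enum_val_eq_rank_in U (aU : a \in U) (i : 'I_#|U|) :
  (enum_val i == a) = (i == enum_rank_in aU a).
Proof. by rewrite -{1}(enum_rankK_in aU aU) (inj_eq enum_val_inj). Qed.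

Lemma adj_induced_tilde_ab e U (aU : a \in U) (bU : b \in U) :
    irreflexive e -> symmetric e ->
  adj_induced (tilde_ab e a b) U =
  transvection (enum_rank_in aU a) (enum_rank_in bU b) *m adj_induced e U
    *m transvection (enum_rank_in bU b) (enum_rank_in aU a).
Proof.
move=> irr sym; apply/matrixP => i j; rewrite transvection_conjE !mxE.
rewrite tilde_ab_F2E // !(enum_val_eq_rank_in aU) (enum_rankK_in bU bU) irr.
by rewrite mulr0 mul0r addr0.
Qed.

Lemma nu_tilde_ab e U : simple_graph e -> a != b -> a \in U -> b \in U ->
  nu (tilde_ab e a b) U = nu e U.
Proof.
case=> irr sym nab aU bU; rewrite /nu (adj_induced_tilde_ab aU bU irr sym).
rewrite det_transvection_conj //; apply: contra nab => /eqP/(congr1 enum_val).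
by rewrite !enum_rankK_in // => ->.
Qed.

Lemma nu_switch_ab_out e U : ~~ ((a \in U) && (b \in U)) ->
  nu (switch_ab e a b) U = nu e U.
Proof.
move=> abU; apply: eq_nu => x y xU yU; rewrite /switch_ab.
by case: ifP => // /orP[] /andP[/eqP ex /eqP ey]; rewrite -ex -ey xU yU in abU.
Qed.

Lemma simple_graph_switch_ab e : simple_graph e -> a != b ->
  simple_graph (switch_ab e a b).
Proof.
case=> irr sym nab; split => [x | x y]; rewrite /switch_ab.
  rewrite irr; case: ifP => // /orP[] /andP[/eqP xa /eqP xb];
    by rewrite -xa -xb eqxx in nab.
by rewrite sym orbC [(y == a) && _]andbC [(y == b) && _]andbC.
Qed.

Lemma switch_tilde_ab e : a != b ->
  switch_ab (tilde_ab e a b) a b =2 tilde_ab (switch_ab e a b) a b.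
Proof.
move=> nab x y; have nba : (b == a) = false by rewrite eq_sym (negPf nab).
rewrite /switch_ab /tilde_ab eqxx nba /=.
case: (x =P a) => [->|_]; case: (y =P a) => [->|_];
  rewrite /= ?nba ?(negPf nab) ?andbT ?andbF ?orbF //.
- by case: (y == b); rewrite ?addNb.
- by case: (x == b); rewrite ?addNb.
Qed.

End SkewCharacteristicPolynomial.

Theorem mainTheorem3 (T : finType) (e : rel T) (a b : T) :
  simple_graph e -> a != b ->
  skewQ e - skewQ (switch_ab e a b) =
  skewQ (tilde_ab e a b) - skewQ (tilde_switch_ab e a b).
Proof.
move=> sg nab; rewrite /skewQ -!sumrB; apply: eq_bigr => U _.
rewrite -!scalerBl; congr (_ *: _).
have [/andP[aU bU] | abU] := boolP ((a \in U) && (b \in U)).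
  rewrite /tilde_switch_ab (eq_nu (in2W (switch_tilde_ab e nab))).
  have sg' := simple_graph_switch_ab sg nab.
  by rewrite !nu_tilde_ab.
by rewrite /tilde_switch_ab !(nu_switch_ab_out _ abU) !subrr.
Qed.
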